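(* Let $\phi:\mathbb{R}\to\mathbb{R}$ be differentiable and $f(z)=W_d\phi(W_{d-1}\phi(W_{d-2}\cdots\phi(W_1z)\cdots))$ with $W_i\in\mathbb{R}^{k_i\times k_{i-1}}$, $k_d=k_0$, $z\in\mathbb{R}^{k_0}$. Let $x\in\mathbb{R}^{k_0}$ and run gradient descent with learning rate $\gamma>0$ on $\mathcal{L}(x,f)=\frac12\|x-f(x)\|_2^2$ (jointly over all $W_1,\dots,W_d$). If $W_d^{(0)}=x{a^{(0)}}^T$ and $W_1^{(0)}=b^{(0)}x^T$ with $a^{(0)}\in\mathbb{R}^{k_{d-1}}$, $b^{(0)}\in\mathbb{R}^{k_1}$, then for all time steps $t$ there exist $a^{(t)}\in\mathbb{R}^{k_{d-1}}$, $b^{(t)}\in\mathbb{R}^{k_1}$ with $W_d^{(t)}=x{a^{(t)}}^T$ and $W_1^{(t)}=b^{(t)}x^T$.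
   Context: $\phi$ is applied coordinatewise. Gradient descent updates each $W_i\leftarrow W_i-\gamma\nabla_{W_i}\mathcal{L}$ simultaneously; the intermediate layers $W_2,\dots,W_{d-1}$ are initialized arbitrarily. *)

From HB Require Import structures.
From mathcomp Require Import all_boot all_order all_algebra.
From mathcomp Require Import all_classical all_reals all_analysis.
Unset Printing Implicit Defensive.
Import Order.TTheory GRing.Theory Num.Theory.
Local Open Scope ring_scope.

(* Only layers 0..L are used; the network has
   depth d = L+1 (paper's W_1 = W 0, W_d = W L). *)
Definition weights (R : realType) (k : nat -> nat) :=
  forall i : nat, 'M[R]_(k i.+1, k i).

Section Net.
Variables (R : realType) (k : nat -> nat) (phi : R -> R).

Fixpoint post (W : weights R k) (z : 'cV[R]_(k 0%N)) (j : nat) : 'cV[R]_(k j) :=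
  match j with
  | 0 => z
  | j'.+1 => map_mx phi (W j' *m post W z j')
  end.

Definition net_out (L : nat) (W : weights R k) (z : 'cV[R]_(k 0%N)) :
  'cV[R]_(k L.+1) := W L *m post W z L.

Definition loss (L : nat) (hk : k L.+1 = k 0%N) (x : 'cV[R]_(k 0%N))
  (W : weights R k) : R :=
  2^-1 * \sum_(i < k 0%N)
     (x i 0 - castmx (hk, erefl 1%N) (net_out L W x) i 0) ^+ 2.

Definition unit_dir (l p0 q0 : nat) : weights R k :=
  fun i => \matrix_(p, q) ((i == l) && (p == p0 :> nat) && (q == q0 :> nat))%:R.

Definition partial_loss L hk x (W : weights R k) (l p0 q0 : nat) : R :=
  derive1 (fun t : R => loss L hk x (fun i => W i + t *: unit_dir l p0 q0 i)) 0.

Definition grad_loss L hk x (W : weights R k) (l : nat) : 'M[R]_(k l.+1, k l) :=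
  \matrix_(p, q) partial_loss L hk x W l p q.

Definition gd_step L hk x (gamma : R) (W : weights R k) : weights R k :=
  fun l => W l - gamma *: grad_loss L hk x W l.

Definition gd_iter L hk x gamma (t : nat) (W0 : weights R k) : weights R k :=
  iter t (gd_step L hk x gamma) W0.

End Net.

From Pilot Require Import Defs.
From HB Require Import structures.
From mathcomp Require Import all_boot all_order all_algebra.
From mathcomp Require Import all_classical all_reals all_analysis.
From mathcomp Require Import ring.
Import Order.TTheory GRing.Theory Num.Theory.
Set Implicit Arguments.
Unset Strict Implicit.
Local Open Scope ring_scope.

(* One gradient step preserves both shapes, whatever the learning rate.
   Last layer: if W_d = x a^T and h is the input of the last layer, then
   f(x) = x (a^T h), so the residual x - f(x) is x times a scalar and the
   gradient -(x - f(x)) h^T is again of the form x c^T.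
   First layer: the loss sees W_1 only through W_1 x, and moving entry (p,q)
   of W_1 by t moves W_1 x by t x_q e_p.  Hence the partial derivative at
   (p,q) is x_q times the partial derivative at (p,q') divided by x_q' for
   any q' with x_q' <> 0, i.e. the gradient is of the form c x^T.  Comparing
   the two derivatives is a chain rule, which is where differentiability of
   phi is needed. *)

Section LineDerivatives.
Variable R : realType.

Lemma derivable_comp (f g : R -> R) (x : R) :
  derivable f x 1 -> derivable g (f x) 1 -> derivable (g \o f) x 1.
Proof.
move=> /derivable1_diffP df /derivable1_diffP dg.
exact/derivable1_diffP/differentiable_comp.
Qed.

Lemma derive1_comp_mulr (G : R -> R) (c : R) : derivable G 0 1 ->
  derive1 (fun t => G (t * c)) 0 = c * derive1 G 0.
Proof.
move=> dG.
have dmul : derivable (fun t : R => t * c) 0 1.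
  exact: (derivableM (@derivable_id _ _ _ _) (derivable_cst _ _ _)).
rewrite -[fun t => _]/(G \o (fun t => t * c)) derive1_comp ?mul0r //.
have -> : derive1 (fun t : R => t * c) 0 = c.
  by have := derive1Mr c (@derivable_id _ R^o 0 1); rewrite derive1_id mul1r.
by rewrite mulrC.
Qed.

Lemma derive1_half_sqr_norm_line n (r u : 'cV[R]_n) :
  derive1 (fun t => 2^-1 * \sum_(i < n) ((r - t *: u) i 0) ^+ 2) 0
    = - (r^T *m u) 0 0.
Proof.
pose c0 := 2^-1 * \sum_(i < n) r i 0 ^+ 2.
pose c1 := - \sum_(i < n) r i 0 * u i 0.
pose c2 := 2^-1 * \sum_(i < n) u i 0 ^+ 2.
have -> : (fun t => 2^-1 * \sum_(i < n) ((r - t *: u) i 0) ^+ 2)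
    = horner (c0%:P + c1 *: 'X + c2 *: 'X^2).
  apply/funext => t /=; rewrite !(hornerD, hornerZ, hornerC, hornerX, hornerXn).
  rewrite /c0 /c1 /c2 -sumrN !mulr_sumr !mulr_suml -!big_split /=.
  by apply: eq_bigr => i _; rewrite !mxE; field.
rewrite derive1E derive_val !(derivD, derivC, derivZ, derivX, derivXn).
rewrite !(hornerD, hornerZ, hornerC, hornerX, hornerXn, hornerMn) /= /c1.
rewrite !expr1 addr0 mulr0 addr0 add0r mulr1 mxE.
by congr (- _); apply: eq_bigr => i _; rewrite mxE.
Qed.

Definition derivable_mx m n (A : R -> 'M[R]_(m, n)) (t0 : R) :=
  forall i j, derivable (fun t => A t i j) t0 1.

Lemma derivable_mx_cst m n (A : 'M[R]_(m, n)) t0 : derivable_mx (fun=> A) t0.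
Proof. by move=> i j; exact: derivable_cst. Qed.

Lemma derivable_mx_line m n (A D : 'M[R]_(m, n)) t0 :
  derivable_mx (fun t => A + t *: D) t0.
Proof.
move=> i j; rewrite (_ : (fun t => _) = fun t => A i j + t * D i j); last first.
  by apply/funext => t; rewrite !mxE.
exact: (derivableD (derivable_cst _ _ _)
         (derivableM (@derivable_id _ _ _ _) (derivable_cst _ _ _))).
Qed.

Lemma derivable_mx_mul m n p (A : R -> 'M[R]_(m, n)) (B : R -> 'M[R]_(n, p)) t0 :
  derivable_mx A t0 -> derivable_mx B t0 -> derivable_mx (fun t => A t *m B t) t0.
Proof.
move=> dA dB i j.
rewrite (_ : (fun t => _) = \sum_(l < n) (fun t => A t i l * B t l j)).
  by apply: derivable_sum => l; exact: derivableM.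
by apply/funext => t; rewrite fct_sumE mxE.
Qed.

Lemma derivable_mx_map (f : R -> R) m n (A : R -> 'M[R]_(m, n)) t0 :
  (forall y, derivable f y 1) -> derivable_mx A t0 ->
  derivable_mx (fun t => map_mx f (A t)) t0.
Proof.
move=> df dA i j.
rewrite (_ : (fun t => _) = f \o (fun t => A t i j)); last first.
  by apply/funext => t; rewrite mxE.
exact: derivable_comp.
Qed.

End LineDerivatives.

Lemma castmx_mulmxl (R : pzSemiRingType) m m' n p (e : m = m')
    (A : 'M[R]_(m, n)) (B : 'M[R]_(n, p)) :
  castmx (e, erefl p) (A *m B) = castmx (e, erefl n) A *m B.
Proof. by case: m' / e; rewrite !castmx_id. Qed.

Lemma big_cast_ord (V : nmodType) m n (e : m = n) (F : 'I_n -> V) :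
  \sum_(i < m) F (cast_ord e i) = \sum_(j < n) F j.
Proof. by case: n / e F => F; apply: eq_bigr => i _; rewrite cast_ord_id. Qed.

Lemma mul_delta_mx_col (R : comPzSemiRingType) m n (i : 'I_m) (j : 'I_n)
    (v : 'cV[R]_n) :
  delta_mx i j *m v = v j 0 *: delta_mx i 0.
Proof.
rewrite -(mul_delta_mx (0 : 'I_1)) -mulmxA -rowE.
by rewrite [row j v]mx11_scalar mul_mx_scalar mxE.
Qed.

Section Network.
Variables (R : realType) (k : nat -> nat) (phi : R -> R).
Local Notation post := (post R k phi).
Local Notation unit_dir := (unit_dir R k).

Lemma post_eq (W W' : weights R k) z j :
  (forall i, (0 < i < j)%N -> W' i = W i) -> W' 0%N *m z = W 0%N *m z ->
  post W' z j = post W z j.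
Proof.
elim: j => [//|[|j] IH] eqW eq0; first by rewrite /= eq0.
change (map_mx phi (W' j.+1 *m post W' z j.+1)
  = map_mx phi (W j.+1 *m post W z j.+1)).
rewrite eqW ?ltnSn // IH // => i /andP[i_gt0 ij].
by apply: eqW; rewrite i_gt0 ltnS ltnW.
Qed.

Lemma line_unit_dir_neq (W : weights R k) l p q t i :
  i != l -> W i + t *: unit_dir l p q i = W i.
Proof.
by move=> /negbTE il; rewrite (_ : unit_dir l p q i = 0) ?scaler0 ?addr0 //;
  apply/matrixP => a b; rewrite !mxE il.
Qed.

Lemma mulmx_line_unit_dir l (A : 'M[R]_(k l.+1, k l)) (p : 'I_(k l.+1))
    (q : 'I_(k l)) t (v : 'cV[R]_(k l)) :
  (A + t *: unit_dir l p q l) *m v = A *m v + (t * v q 0) *: delta_mx p 0.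
Proof.
have -> : unit_dir l p q l = delta_mx p q by apply/matrixP => a b; rewrite !mxE eqxx.
by rewrite mulmxDl -scalemxAl mul_delta_mx_col scalerA.
Qed.

Hypothesis hphi : forall y, derivable phi y 1.

Lemma derivable_mx_post_line (W D : weights R k) z j t0 :
  derivable_mx (fun t => post (fun i => W i + t *: D i) z j) t0.
Proof.
elim: j => [|j IH] /=; first exact: derivable_mx_cst.
apply: derivable_mx_map => //.
by apply: derivable_mx_mul IH; exact: derivable_mx_line.
Qed.

Variables (L : nat) (hk : k L.+1 = k 0%N) (x : 'cV[R]_(k 0%N)).
Local Notation xL := (castmx (esym hk, erefl 1%N) x).
Local Notation net_out := (net_out R k phi L).
Local Notation loss := (loss R k phi L hk x).
Local Notation partial_loss := (partial_loss R k phi L hk x).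
Local Notation grad_loss := (grad_loss R k phi L hk x).
Local Notation gd_step := (gd_step R k phi L hk x).

Lemma lossE W : loss W = 2^-1 * \sum_(j < k L.+1) ((xL - net_out W x) j 0) ^+ 2.
Proof.
rewrite /loss -(big_cast_ord (esym hk)); congr (_ * _); apply: eq_bigr => i _.
by rewrite [in RHS]mxE !castmxE /= esymK cast_ordKV cast_ord_id !mxE.
Qed.

Lemma derivable_loss_line (W D : weights R k) (t0 : R) :
  derivable (fun t : R => loss (fun i => W i + t *: D i)) t0 1.
Proof.
set N := fun t => net_out (fun i => W i + t *: D i) x.
have dN : derivable_mx (fun t => xL - N t) t0.
  move=> i j; rewrite (_ : (fun t => _) = fun t => xL i j - N t i j); last first.
    by apply/funext => t; rewrite !mxE.
  apply: derivableB; first exact: derivable_cst.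
  apply: derivable_mx_mul; first exact: derivable_mx_line.
  exact: derivable_mx_post_line.
have dsum : derivable (fun t => \sum_(j < k L.+1) (xL - N t) j 0 ^+ 2) t0 1.
  rewrite -fct_sumE; apply: derivable_sum => j.
  exact: derivableM (dN j 0) (dN j 0).
rewrite (_ : (fun t => _) = fun t => 2^-1 * \sum_(j < k L.+1) (xL - N t) j 0 ^+ 2).
  exact: (derivableM (derivable_cst _ _ _) dsum).
by apply/funext => t; rewrite lossE.
Qed.

Hypothesis hL : (1 <= L)%N.

Lemma loss_eq_first (W W' : weights R k) :
  (forall i, (0 < i)%N -> W' i = W i) -> W' 0%N *m x = W 0%N *m x ->
  loss W' = loss W.
Proof.
move=> eqW eq0; rewrite /loss /Defs.net_out eqW // (post_eq (W := W)) //.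
by move=> i /andP[i_gt0 _]; exact: eqW.
Qed.

Lemma partial_loss_first_scale W (p : 'I_(k 1)) (q q' : 'I_(k 0%N)) c :
  x q 0 = c * x q' 0 -> partial_loss W 0 p q = c * partial_loss W 0 p q'.
Proof.
move=> xqE; rewrite /Defs.partial_loss -derive1_comp_mulr; last first.
  exact: derivable_loss_line.
congr (derive1 _ 0); apply/funext => t; apply: loss_eq_first.
  by move=> i i_gt0; rewrite !line_unit_dir_neq // -lt0n.
by rewrite !mulmx_line_unit_dir xqE mulrA.
Qed.

Lemma grad_loss_first W : exists c : 'cV[R]_(k 1), grad_loss W 0 = c *m x^T.
Proof.
have mulE (c : 'cV[R]_(k 1)) p q : (c *m x^T) p q = c p 0 * x q 0.
  by rewrite !mxE big_ord1 !mxE.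
have [[q' xq'_neq0] | x_eq0] := pselect (exists q', x q' 0 != 0).
  exists (\col_p (partial_loss W 0 p q' / x q' 0)); apply/matrixP => p q.
  rewrite mulE !mxE (@partial_loss_first_scale W p q q' (x q 0 / x q' 0)) ?divfK //.
  by ring.
exists 0; apply/matrixP => p q.
rewrite mul0mx !mxE (@partial_loss_first_scale W p q q 0) ?mul0r //.
by apply/eqP/negPn/negP => xq_neq0; apply: x_eq0; exists q.
Qed.

Lemma grad_loss_last W :
  grad_loss W L = - ((xL - net_out W x) *m (post W x L)^T).
Proof.
set h := post W x L; set r := xL - net_out W x.
apply/matrixP => p q; rewrite !mxE big_ord1 !mxE /Defs.partial_loss.
have -> : (fun t => loss (fun i => W i + t *: unit_dir L p q i))
    = fun t => 2^-1 *
        \sum_(j < k L.+1) ((r - t *: (h q 0 *: delta_mx p 0)) j 0) ^+ 2.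
  apply/funext => t; rewrite lossE /Defs.net_out (post_eq (W := W)); last 2 first.
  - by move=> i /andP[_ iL]; rewrite line_unit_dir_neq // ltn_eqF.
  - by rewrite line_unit_dir_neq // eq_sym -lt0n.
  by rewrite mulmx_line_unit_dir opprD addrA scalerA.
rewrite derive1_half_sqr_norm_line -scalemxAr -colE !mxE.
by rewrite mulrC.
Qed.

Lemma gd_step_first_rank_one gamma W (b : 'cV[R]_(k 1)) :
  W 0%N = b *m x^T -> exists b' : 'cV[R]_(k 1), gd_step gamma W 0%N = b' *m x^T.
Proof.
move=> W0E; have [c gradE] := grad_loss_first W.
by exists (b - gamma *: c); rewrite /Defs.gd_step W0E gradE mulmxBl scalemxAl.
Qed.

Lemma gd_step_last_rank_one gamma W (a : 'cV[R]_(k L)) :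
  W L = castmx (esym hk, erefl (k L)) (x *m a^T) ->
  exists a' : 'cV[R]_(k L),
    gd_step gamma W L = castmx (esym hk, erefl (k L)) (x *m a'^T).
Proof.
rewrite castmx_mulmxl => WLE; set h := post W x L.
have residualE : xL - net_out W x = xL *m (1%:M - a^T *m h).
  by rewrite /Defs.net_out WLE mulmxBr mulmx1 mulmxA.
exists (a^T + gamma *: ((1%:M - a^T *m h) *m h^T))^T.
rewrite castmx_mulmxl trmxK /Defs.gd_step grad_loss_last WLE residualE.
by rewrite scalerN opprK [RHS]mulmxDr -scalemxAr mulmxA.
Qed.

End Network.

Theorem mainTheorem9 (R : realType) (phi : R -> R)
  (hphi : forall y : R, derivable phi y 1)
  (k : nat -> nat) (L : nat) (hL : (1 <= L)%N) (hk : k L.+1 = k 0%N)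
  (x : 'cV[R]_(k 0%N)) (gamma : R) (hgamma : 0 < gamma)
  (W0 : weights R k) (a0 : 'cV[R]_(k L)) (b0 : 'cV[R]_(k 1%N))
  (hWd : W0 L = castmx (esym hk, erefl (k L)) (x *m a0^T))
  (hW1 : W0 0%N = b0 *m x^T) :
  forall t : nat, exists (a : 'cV[R]_(k L)) (b : 'cV[R]_(k 1%N)),
    gd_iter R k phi L hk x gamma t W0 L = castmx (esym hk, erefl (k L)) (x *m a^T) /\
    gd_iter R k phi L hk x gamma t W0 0%N = b *m x^T.
Proof.
elim=> [|t [a [b [WLE W0E]]]]; first by exists a0, b0.
rewrite /gd_iter iterS -/(gd_iter R k phi L hk x gamma t W0).
have [a' ->] := gd_step_last_rank_one phi hL gamma WLE.
have [b' ->] := gd_step_first_rank_one hphi hk hL gamma W0E.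
by exists a', b'.
Qed.
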